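(* Let $R$ be a commutative ring and $H$ an $R$-algebra which is a free $R$-module with basis $\mathcal{B}=\{z^k y_i : k=0,\dots,m-1,\ i=1,\dots,l\}$, where $z\in H$ is central, $y_1=1_H$, and $y_1,\dots,y_l\in H$. Let $\tau_{\mathcal{B}}\colon H\to R$ be the $R$-linear map with $\tau_{\mathcal{B}}(1_H)=1$ and $\tau_{\mathcal{B}}(b)=0$ for $b\in\mathcal{B}\setminus\{1_H\}$. For every integer $k\ge 0$ let $A^k$ be the $l\times l$ matrix $A^k=(\tau_{\mathcal{B}}(z^k y_{i_1}y_{i_2}))_{i_1,i_2=1}^l$. For $i=1,\dots,l$ write $z^m y_i=\sum_{p=0}^{m-1}\sum_{q=1}^l \zeta^p_{iq}\, z^p y_q$ with $\zeta^p_{iq}\in R$, and let $Z^p=(\zeta^p_{iq})_{i,q=1}^l$ for $p=0,\dots,m-1$. Then for every $\alpha\in\{0,\dots,m-2\}$, $$A^{\alpha+m}=\sum_{p=0}^{m-1} Z^p A^{\alpha+p},$$ i.e. $A^{\alpha+m}$ equals the $l\times lm$ matrix $(Z^0\ Z^1\ \cdots\ Z^{m-1})$ multiplied by the $lm\times l$ matrix obtained by stacking $A^{\alpha},A^{\alpha+1},\dots,A^{\alpha+m-1}$ vertically.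
   Context: The Gram matrix of $\tau_{\mathcal{B}}$ with respect to $\mathcal{B}$ has entries $\tau_{\mathcal{B}}(z^{k_1}y_{i_1}z^{k_2}y_{i_2})=\tau_{\mathcal{B}}(z^{k_1+k_2}y_{i_1}y_{i_2})$, so it is the $m\times m$ block matrix whose $(k_1,k_2)$ block is $A^{k_1+k_2}$. *)

From mathcomp Require Import all_boot all_algebra.
Set Implicit Arguments. Unset Strict Implicit. Unset Printing Implicit Defensive.
Import GRing.Theory.
Local Open Scope ring_scope.

Definition free_basis (R : pzRingType) (H : lmodType R) (I : finType)
  (b : I -> H) : Prop :=
  (forall h : H, exists c : I -> R, h = \sum_(i : I) c i *: b i) /\
  (forall c : I -> R, \sum_(i : I) c i *: b i = 0 -> forall i, c i = 0).

Definition zy_basis (R : pzRingType) (H : algType R) (m l : nat)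
  (z : H) (y : 'I_l -> H) (ki : 'I_m * 'I_l) : H :=
  z ^+ ki.1 * y ki.2.

Definition Amx (R : pzRingType) (H : algType R) (l : nat)
  (tau : H -> R) (z : H) (y : 'I_l -> H) (k : nat) : 'M[R]_l :=
  \matrix_(i1 < l, i2 < l) tau (z ^+ k * y i1 * y i2).

Definition Zmx (R : pzRingType) (l : nat) (zeta : nat -> 'I_l -> 'I_l -> R)
  (p : nat) : 'M[R]_l :=
  \matrix_(i < l, q < l) zeta p i q.

From mathcomp Require Import all_boot all_algebra.
From HB Require Import structures.
Import GRing.Theory.
Local Open Scope ring_scope.

(* Read off the (i1, i2) entry of A^(k+m) as tau (z^k (z^m y_i1) y_i2): the
   map u |-> tau (z^k u y_i2) is R-linear, so applying it to the expansion of
   z^m y_i1 in the basis gives the (i1, i2) entry of sum_p Z^p A^(k+p). *)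

Section GramRecurrence.

Variables (R : pzRingType) (H : algType R) (l m : nat).
Variables (tau : {scalar H}) (z : H) (y : 'I_l -> H).
Variable zeta : nat -> 'I_l -> 'I_l -> R.

Hypothesis zmy_expansion : forall i : 'I_l,
  z ^+ m * y i = \sum_(p < m) \sum_(q < l) zeta p i q *: (z ^+ p * y q).

Lemma Amx_addnE k p i1 i2 :
  Amx tau z y (k + p) i1 i2 = tau (z ^+ k * (z ^+ p * y i1) * y i2).
Proof. by rewrite mxE exprD mulrA. Qed.

Lemma Amx_addn_recurrence k :
  Amx tau z y (k + m) = \sum_(p < m) Zmx zeta p *m Amx tau z y (k + p).
Proof.
apply/matrixP => i1 i2; rewrite Amx_addnE zmy_expansion summxE.
rewrite mulr_sumr mulr_suml linear_sum; apply: eq_bigr => p _.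
rewrite mulr_sumr mulr_suml linear_sum mxE; apply: eq_bigr => q _.
by rewrite -scalerAr -scalerAl linearZ /= -Amx_addnE !mxE.
Qed.

End GramRecurrence.

Theorem lemma3p1 (R : comPzRingType) (H : algType R) (m l : nat)
  (z : H) (y : 'I_l.+1 -> H) (tau : H -> R)
  (zeta : nat -> 'I_l.+1 -> 'I_l.+1 -> R)
  (hz : forall x : H, z * x = x * z)
  (hy1 : y ord0 = 1)
  (hfree : free_basis (zy_basis (m := m) z y))
  (htau_lin : forall (a : R) (u v : H), tau (a *: u + v) = a * tau u + tau v)
  (htau1 : tau 1 = 1)
  (htau0 : forall (k : 'I_m) (i : 'I_l.+1),
      (val k != 0%N) || (i != ord0) -> tau (z ^+ k * y i) = 0)
  (hzeta : forall i : 'I_l.+1,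
      z ^+ m * y i = \sum_(p < m) \sum_(q < l.+1) zeta p i q *: (z ^+ p * y q))
  (alpha : nat) (halpha : (alpha.+2 <= m)%N) :
  Amx tau z y (alpha + m) = \sum_(p < m) Zmx zeta p *m Amx tau z y (alpha + p).
Proof.
pose tauL : {scalar H} := HB.pack tau (GRing.isLinear.Build R H R *%R tau htau_lin).
exact: (@Amx_addn_recurrence _ _ _ _ tauL _ _ _ hzeta).
Qed.
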